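(* Let $G=(V,E)$ be an undirected graph with $n$ nodes and $m$ edges. Let $H$ be the set of nodes with degree larger than $m^{1/3}$, and $L=V\setminus H$. Orient every edge $\{u,v\}$ from $u$ to $v$ if $\deg(u)\le \deg(v)$ (breaking ties arbitrarily). Let $P$ be the number of directed $2$-paths $u\to v\to w$ with $u\in L$, $v\in H$, $w\in H$ (i.e., the edge $\{u,v\}$ is oriented from $u$ to $v$ and the edge $\{v,w\}$ is oriented from $v$ to $w$). If $P>100\,m^{4/3}\log^2 n$, then $G$ contains at least $P/(100\log^2 n)$ $4$-cycles.
   Context: Graphs are simple, unweighted and undirected; $\deg(v)$ denotes the degree of node $v$ in $G$. A $2$-path is a path $u,v,w$ on three distinct nodes with edges $\{u,v\},\{v,w\}$; $v$ is its center. A $4$-cycle is a cycle on four distinct nodes. $\log$ denotes the logarithm (base 2). *)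

From mathcomp Require Import all_boot.
From Stdlib Require Import Reals.
Set Implicit Arguments. Unset Strict Implicit. Unset Printing Implicit Defensive.

Section Graph.
Variable T : finType.
Variable e : rel T.

Definition simple_graph := symmetric e /\ irreflexive e.

Definition deg (v : T) : nat := #|[set w | e v w]|.

Definition edges : {set {set T}} :=
  [set E | [exists u, exists v, e u v && (E == [set u; v])]].

Definition nedges : nat := #|edges|.

(* H = nodes of degree > m^{1/3}, i.e. deg^3 > m ; L = complement *)
Definition high (v : T) : bool := nedges < deg v ^ 3.

Definition degree_orientation (o : rel T) : Prop :=
  (forall u v, o u v -> e u v) /\
  (forall u v, e u v -> (o u v (+) o v u)) /\
  (forall u v, o u v -> deg u <= deg v).

Definition P_count (o : rel T) : nat :=
  #|[set t : T * T * T |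
      let: (u, v, w) := t in
      [&& ~~ high u, high v, high w, o u v & o v w]]|.

Definition cycle4_edges (a b c d : T) : {set {set T}} :=
  [set [set a; b]; [set b; c]; [set c; d]; [set d; a]].

Definition cycles4 : {set {set {set T}}} :=
  [set C | [exists a, exists b, exists c, exists d,
     [&& uniq [:: a; b; c; d], e a b, e b c, e c d, e d a &
         C == cycle4_edges a b c d]]].

Definition ncycles4 : nat := #|cycles4|.
End Graph.

Definition log2 (x : R) : R := (ln x / ln 2)%R.

From Stdlib Require Import Reals Lra.
From mathcomp Require Import all_boot zify.
Set Implicit Arguments. Unset Strict Implicit. Unset Printing Implicit Defensive.

(* For t < n let V_t be the set of high nodes of degree larger than t. If u -> v -> w
   is counted by P, then v has at most deg v in-neighbours u, and the arc v -> w lies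
   inside V_t for each of the deg v thresholds t < deg v (as deg v <= deg w); hence
   P <= sum_t E(V_t), where E(V) is the number of arcs inside V, while
   sum_t |V_t| <= sum_v deg v <= 2m. The Kovari-Sos-Turan argument (Cauchy-Schwarz on
   out-degrees, then on codegrees) bounds E(V) by |V| (2 sqrt|H| + (64 C)^(1/4)), C the
   number of 4-cycles, and |H|^3 <= 8 m^2 since every high node has degree above
   m^(1/3). So P <= 6 m^(4/3) + 2 m (64 C)^(1/4); the first term is negligible against P,
   and P^3 > 10^6 m^4 then forces C >= P, more than the claimed bound. *)

Lemma card_set_sum (I : finType) (b : pred I) : #|[set i | b i]| = \sum_i (b i : nat).
Proof. by rewrite -sum1dep_card big_mkcond; apply: eq_bigr => i _; case: (b i). Qed.

Lemma leq_sum_cond (I : finType) (P : pred I) (F G : I -> nat) :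
  (forall i, P i -> F i <= G i) -> \sum_(i | P i) F i <= \sum_i G i.
Proof. by move=> FG; rewrite big_mkcond; apply: leq_sum => i _; case: ifP => // /FG. Qed.

Lemma leq_card_fiber (A B : finType) (S : {set A}) (C : {set B}) (f : A -> B) k :
  {in S, forall x, f x \in C} ->
  {in C, forall y, #|[set x in S | f x == y]| <= k} ->
  #|S| <= k * #|C|.
Proof.
move=> fSC fiber_le.
rewrite -sum1_card (partition_big f (mem C)) //= mulnC -sum_nat_const.
apply: leq_sum => y yC; rewrite sum1dep_card.
apply: leq_trans (fiber_le y yC); apply: subset_leq_card.
by apply/subsetP => x; rewrite !inE.
Qed.

Lemma sum_ord_ltn (n d : nat) : \sum_(t < n) (t < d : nat) = minn n d.
Proof.
elim: n => [|n IH]; first by rewrite big_ord0 min0n.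
by rewrite big_ord_recr /= IH; case: (ltnP n d) => h /=; lia.
Qed.

Lemma sqr_sum (I : finType) (P : pred I) (f : I -> nat) :
  (\sum_(i | P i) f i) ^ 2 = \sum_(i | P i) \sum_(j | P j) f i * f j.
Proof. by rewrite expnS expn1 big_distrl; apply: eq_bigr => i _; rewrite big_distrr. Qed.

Lemma leq_sqr_sum (I : finType) (P : pred I) (f : I -> nat) :
  (\sum_(i | P i) f i) ^ 2 <= #|[set i | P i]| * \sum_(i | P i) f i ^ 2.
Proof.
rewrite -(leq_pmul2l (isT : 0 < 2)) sqr_sum big_distrr /=.
have -> : 2 * (#|[set i | P i]| * \sum_(i | P i) f i ^ 2) =
          \sum_(i | P i) \sum_(j | P j) (f i ^ 2 + f j ^ 2).
  under [RHS]eq_bigr => i _ do rewrite big_split /= sum_nat_cond_const.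
  by rewrite big_split /= -big_distrr /= sum_nat_cond_const; lia.
apply: leq_sum => i _; rewrite big_distrr; apply: leq_sum => j _.
exact: (nat_Cauchy (f i) (f j)).1.
Qed.

Lemma sqr_sum_bool (I : finType) (P : pred I) (b : I -> bool) :
  (\sum_(i | P i) (b i : nat)) ^ 2 =
  \sum_(i | P i) (b i : nat) + \sum_(i | P i) \sum_(j | P j && (j != i)) (b i && b j : nat).
Proof.
rewrite sqr_sum -big_split; apply: eq_bigr => i Pi.
rewrite (bigD1 i Pi) /= mulnb andbb; congr (_ + _).
by apply: eq_bigr => j _; rewrite mulnb.
Qed.

Lemma set2_inj (T : finType) (x y p q : T) :
  [set x; y] = [set p; q] -> (x = p /\ y = q) \/ (x = q /\ y = p).
Proof.
move=> E.
have : x \in [set p; q] by rewrite -E set21.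
have : y \in [set p; q] by rewrite -E set22.
have : p \in [set x; y] by rewrite E set21.
have : q \in [set x; y] by rewrite E set22.
rewrite !inE => /orP[]/eqP hq /orP[]/eqP hp /orP[]/eqP hy /orP[]/eqP hx;
  first [left; split; congruence | right; split; congruence].
Qed.

Section GraphCounting.
Variables (T : finType) (e : rel T).

Lemma degE v : deg e v = \sum_w (e v w : nat).
Proof. exact: card_set_sum. Qed.

Lemma sum_deg_le : \sum_v deg e v <= 2 * nedges e.
Proof.
under eq_bigr => v _ do rewrite degE.
rewrite pair_bigA -(card_set_sum (fun p : T * T => e p.1 p.2)).
apply: (leq_card_fiber (f := fun p : T * T => [set p.1; p.2])).
  move=> [u v]; rewrite !inE /= => euv.
  by apply/existsP; exists u; apply/existsP; exists v; rewrite euv eqxx.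
move=> E; rewrite inE => /existsP[a /existsP[b /andP[_ /eqP ->]]].
apply: leq_trans (_ : #|[set (a, b); (b, a)]| <= 2); last by rewrite cards2; case: (_ != _).
apply/subset_leq_card/subsetP => -[x y]; rewrite !inE /= => /andP[_ /eqP/set2_inj].
by case=> -[-> ->]; rewrite eqxx ?orbT.
Qed.

Lemma nedges_gt0 u v : e u v -> 0 < nedges e.
Proof.
move=> euv; apply/card_gt0P; exists [set u; v]; rewrite inE.
by apply/existsP; exists u; apply/existsP; exists v; rewrite euv eqxx.
Qed.

Lemma card_gt1_of_edge u v : irreflexive e -> e u v -> 1 < #|T|.
Proof.
move=> eirr euv; have := max_card (mem [set u; v]); rewrite cards2.
by case: eqP euv => [-> | _ _]; rewrite ?eirr.
Qed.

Lemma mem_cycle4_edges (x y a b c d : T) :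
  [set x; y] \in cycle4_edges a b c d ->
  (x = a /\ y = b) \/ (x = b /\ y = a) \/ (x = b /\ y = c) \/ (x = c /\ y = b) \/
  (x = c /\ y = d) \/ (x = d /\ y = c) \/ (x = d /\ y = a) \/ (x = a /\ y = d).
Proof. by rewrite !inE => /orP[/orP[/orP[|]|]|] /eqP/set2_inj; tauto. Qed.

Lemma uniq4_neq (a b c d : T) : uniq [:: a; b; c; d] ->
  a <> b /\ a <> c /\ a <> d /\ b <> c /\ b <> d /\ c <> d.
Proof.
rewrite /= !inE !negb_or => /and4P[/and3P[/eqP ? /eqP ? /eqP ?] /andP[/eqP ? /eqP ?] /eqP ? _].
by do !split.
Qed.

Lemma cycle4_edges_inj (a b c d a' b' c' d' : T) :
  uniq [:: a; b; c; d] -> uniq [:: a'; b'; c'; d'] ->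
  cycle4_edges a' b' c' d' = cycle4_edges a b c d ->
  (a', b', c', d') \in [:: (a, b, c, d); (b, c, d, a); (c, d, a, b); (d, a, b, c);
                           (a, d, c, b); (d, c, b, a); (c, b, a, d); (b, a, d, c)].
Proof.
move=> /uniq4_neq[? [? [? [? [? ?]]]]] /uniq4_neq[? [? [? [? [? ?]]]]] E.
have /mem_cycle4_edges H1 : [set a'; b'] \in cycle4_edges a b c d by rewrite -E !inE eqxx.
have /mem_cycle4_edges H2 : [set b'; c'] \in cycle4_edges a b c d by rewrite -E !inE eqxx !orbT.
have /mem_cycle4_edges H3 : [set c'; d'] \in cycle4_edges a b c d by rewrite -E !inE eqxx !orbT.
decompose [or and] H1; clear H1; subst; try congruence;
decompose [or and] H2; clear H2; subst; try congruence;
decompose [or and] H3; clear H3; subst; try congruence;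
by rewrite !inE eqxx ?orbT.
Qed.

Definition c4_tuple (a b c d : T) : bool :=
  [&& uniq [:: a; b; c; d], e a b, e b c, e c d & e d a].

Lemma sum_c4_tuple_le :
  \sum_a \sum_b \sum_c \sum_d (c4_tuple a b c d : nat) <= 8 * ncycles4 e.
Proof.
rewrite pair_bigA; under eq_bigr => p _ do rewrite pair_bigA.
rewrite pair_bigA -(card_set_sum (fun x : (T * T) * (T * T) =>
  c4_tuple x.1.1 x.1.2 x.2.1 x.2.2)).
apply: (leq_card_fiber (f := fun x : (T * T) * (T * T) =>
  cycle4_edges x.1.1 x.1.2 x.2.1 x.2.2)).
  move=> [[a b] [c d]]; rewrite !inE /= => /and5P[u4 eab ebc ecd eda].
  apply/existsP; exists a; apply/existsP; exists b; apply/existsP; exists c.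
  by apply/existsP; exists d; move: u4 => /= ->; rewrite eab ebc ecd eda eqxx.
move=> C; rewrite inE => /existsP[a /existsP[b /existsP[c /existsP[d]]]].
move=> /and3P[u4 _ /and4P[_ _ _ /eqP ->]].
pose s := [:: (a, b, (c, d)); (b, c, (d, a)); (c, d, (a, b)); (d, a, (b, c));
              (a, d, (c, b)); (d, c, (b, a)); (c, b, (a, d)); (b, a, (d, c))].
apply: leq_trans (card_size s); apply/subset_leq_card/subsetP => -[[a' b'] [c' d']].
rewrite !inE /= => /andP[/and5P[u4' _ _ _ _] /eqP E].
have := cycle4_edges_inj u4 u4' E; rewrite !inE.
by rewrite -!pair_eqE /= -!andbA.
Qed.

End GraphCounting.

Section CodegreeCounting.
Variables (T : finType) (r : rel T) (V : {set T}).

Definition arcs := \sum_(v in V) \sum_(w in V) (r v w : nat).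

Definition codeg w w' := \sum_(v in V) (r v w && r v w' : nat).

Definition cherries := \sum_(w in V) \sum_(w' in V | w' != w) codeg w w'.

Definition k22s := \sum_(w in V) \sum_(w' in V | w' != w)
  \sum_(v in V) \sum_(v' in V | v' != v) ((r v w && r v w') && (r v' w && r v' w') : nat).

Lemma arcsE : arcs = \sum_v \sum_w ([&& v \in V, w \in V & r v w] : nat).
Proof.
rewrite /arcs big_mkcond; apply: eq_bigr => v _; case: (v \in V); last by rewrite big1.
by rewrite big_mkcond; apply: eq_bigr => w _; case: (w \in V).
Qed.

Lemma card_set_mem : #|[set v | v \in V]| = #|V|.
Proof. by apply: eq_card => v; rewrite inE. Qed.

Lemma arcs_sqr_le : arcs ^ 2 <= #|V| * (arcs + cherries).
Proof.
apply: leq_trans (leq_sqr_sum _ _) _; rewrite card_set_mem leq_mul2l; apply/orP; right.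
under eq_bigr => v _ do rewrite sqr_sum_bool.
rewrite big_split /= leq_add2l /cherries exchange_big /=.
by apply: eq_leq; apply: eq_bigr => w _; rewrite exchange_big.
Qed.

Lemma cherries_sqr_le : cherries ^ 2 <= #|V| ^ 2 * (cherries + k22s).
Proof.
apply: leq_trans (leq_sqr_sum _ _) _; rewrite card_set_mem expnS expn1 -mulnA.
rewrite leq_mul2l; apply/orP; right.
rewrite /k22s /cherries -big_split big_distrr /=; apply: leq_sum => w _.
apply: leq_trans (leq_sqr_sum _ _) _; rewrite -big_split /=.
apply: leq_mul.
  by apply/subset_leq_card/subsetP => w'; rewrite inE => /andP[].
by apply: eq_leq; apply: eq_bigr => w' _; rewrite /codeg sqr_sum_bool.
Qed.

End CodegreeCounting.

Lemma k22s_le (T : finType) (e r : rel T) (V : {set T}) :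
  simple_graph e -> subrel r e -> k22s r V <= 8 * ncycles4 e.
Proof.
move=> [e_sym eirr] sub_re.
have neq u v : r u v -> u != v.
  by move=> /sub_re; apply: contraTneq => ->; rewrite eirr.
apply: leq_trans (sum_c4_tuple_le e).
apply: leq_trans (_ : \sum_w \sum_w' \sum_v \sum_v' (c4_tuple e v w v' w' : nat) <= _).
  apply: leq_sum_cond => w _; apply: leq_sum_cond => w' /andP[_ ww'].
  apply: leq_sum_cond => v _; apply: leq_sum_cond => v' /andP[_ vv'].
  case: (boolP (r v w && r v w')) => [/andP[rvw rvw']|] //.
  case: (boolP (r v' w && r v' w')) => [/andP[rv'w rv'w']|] //.
  rewrite /c4_tuple /= !inE !negb_or (neq _ _ rvw) (neq _ _ rvw') (neq _ _ rv'w').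
  rewrite [w == v']eq_sym (neq _ _ rv'w) [v == v']eq_sym vv' [w == w']eq_sym ww' /=.
  by rewrite [e w v']e_sym [e w' v]e_sym !sub_re.
apply: eq_leq; under eq_bigr => w _ do rewrite exchange_big.
rewrite exchange_big; apply: eq_bigr => v _; apply: eq_bigr => w _.
by rewrite exchange_big.
Qed.

Lemma sqr_absorb (a b c : nat) : a ^ 2 <= c * (a + b) -> 2 * c <= a -> a ^ 2 <= 2 * c * b.
Proof. by move=> h1 h2; nia. Qed.

Lemma kst_dichotomy (N k E Y Z : nat) :
  N <= k -> E ^ 2 <= N * (E + Y) -> Y ^ 2 <= N ^ 2 * (Y + Z) ->
  E ^ 2 <= 4 * N ^ 2 * k \/ E ^ 4 <= 8 * N ^ 4 * Z.
Proof.
move=> Nk hE hY; case: (leqP (E ^ 2) (4 * N ^ 2 * k)) => [|big_E]; [by left | right].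
have hE2 : E ^ 2 <= 2 * N * Y.
  apply: sqr_absorb hE _; rewrite -leq_sqr; apply: leq_trans (ltnW big_E); nia.
have hY2 : Y ^ 2 <= 2 * N ^ 2 * Z.
  apply: sqr_absorb hY _; nia.
have -> : E ^ 4 = (E ^ 2) ^ 2 by rewrite -expnM.
apply: leq_trans (_ : (2 * N * Y) ^ 2 <= _); first by rewrite leq_sqr.
nia.
Qed.

Section Thresholds.
Variables (T : finType) (e o : rel T).

(* [high] is stated with [Nat.pow], not [expn]. *)
Lemma highE v : high e v = (nedges e < deg e v ^ 3).
Proof. by rewrite /high /= !multE; congr (_ < _); lia. Qed.

Definition threshold_set t := [set v | high e v && (t < deg e v)].

Lemma card_high_cube_le : #|[set v | high e v]| ^ 3 <= 8 * nedges e ^ 2.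
Proof.
case: (set_0Vmem [set v | high e v]) => [-> | [x]]; first by rewrite cards0.
rewrite inE => hx; case: (arg_minnP (deg e) hx) => v0 hv0 v0_min.
set k := #|_|; set m := nedges e; set d0 := deg e v0.
have kd0 : k * d0 <= 2 * m.
  apply: leq_trans (sum_deg_le e); rewrite /k -sum1_card big_distrl /=.
  by apply: leq_sum_cond => v; rewrite inE mul1n => /v0_min.
have md0 : m < d0 ^ 3 by rewrite -highE.
have : k ^ 3 * (m + 1) <= 8 * m ^ 3.
  apply: (@leq_trans ((k * d0) ^ 3)); first by rewrite expnMn leq_mul2l addn1 md0 orbT.
  by rewrite (@leq_trans ((2 * m) ^ 3)) ?leq_exp2r // expnMn.
by rewrite !expnS expn0; nia.
Qed.

Lemma sum_card_threshold_le : \sum_(t < #|T|) #|threshold_set t| <= 2 * nedges e.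
Proof.
under eq_bigr => t _ do rewrite card_set_sum.
rewrite exchange_big /=; apply: leq_trans (sum_deg_le e); apply: leq_sum => v _.
apply: leq_trans (_ : \sum_(t < #|T|) (t < deg e v : nat) <= _).
  by apply: leq_sum => t _; case: (high e v).
by rewrite sum_ord_ltn geq_minr.
Qed.

Lemma P_count_gt0_arc : 0 < P_count e o -> exists u v, o u v.
Proof. by case/card_gt0P => -[[u v] w]; rewrite inE => /and5P[_ _ _ ouv _]; exists u, v. Qed.

Hypothesis graph : simple_graph e.
Hypothesis orient : degree_orientation e o.

Lemma paths_through_le v w :
  \sum_u ([&& ~~ high e u, high e v, high e w, o u v & o v w] : nat) <=
  \sum_(t < #|T|) ([&& v \in threshold_set t, w \in threshold_set t & o v w] : nat).
Proof.
case: graph orient => e_sym _ [sub_oe [_ o_deg]].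
have [/and3P[hv hw ovw] | not_vw] := boolP [&& high e v, high e w & o v w]; last first.
  rewrite big1 // => u _; case: and5P => // -[_ hv hw _ ovw].
  by rewrite hv hw ovw in not_vw.
apply: (@leq_trans (deg e v)).
  rewrite degE; apply: leq_sum => u _; case: and5P => // -[_ _ _ ouv _].
  by rewrite e_sym sub_oe.
have -> : deg e v = minn #|T| (deg e v) by apply/esym/minn_idPr/max_card.
rewrite -sum_ord_ltn; apply: leq_sum => t _; case: ltnP => //= t_lt.
by rewrite !inE hv hw ovw t_lt (leq_trans t_lt (o_deg _ _ ovw)).
Qed.

Lemma P_count_le_sum_arcs : P_count e o <= \sum_(t < #|T|) arcs o (threshold_set t).
Proof.
have -> : P_count e o = \sum_u \sum_v \sum_w
    ([&& ~~ high e u, high e v, high e w, o u v & o v w] : nat).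
  by rewrite pair_bigA pair_bigA -card_set_sum; apply: eq_card => -[[u v] w]; rewrite !inE.
under [X in _ <= X]eq_bigr => t _ do rewrite arcsE.
rewrite exchange_big [X in _ <= X]exchange_big /=; apply: leq_sum => v _.
rewrite exchange_big [X in _ <= X]exchange_big /=; apply: leq_sum => w _.
exact: paths_through_le.
Qed.

End Thresholds.

Local Open Scope R_scope.

Lemma INR_addn (a b : nat) : INR (a + b) = INR a + INR b.
Proof. exact: plus_INR. Qed.

Lemma INR_muln (a b : nat) : INR (a * b) = INR a * INR b.
Proof. exact: mult_INR. Qed.

Lemma INR_expn (a k : nat) : INR (a ^ k) = INR a ^ k.
Proof. by elim: k => [|k IH] //=; rewrite expnS INR_muln IH. Qed.

Lemma INR_leq (a b : nat) : (a <= b)%N -> INR a <= INR b.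
Proof. by move/leP; apply: le_INR. Qed.

Lemma INR_sum_le_mulr (I : finType) (F G : I -> nat) (c : R) :
  (forall i, INR (F i) <= INR (G i) * c) ->
  INR (\sum_i F i) <= INR (\sum_i G i) * c.
Proof.
move=> FG; elim/big_ind2: _ => // [|a b a' b' h h']; first by rewrite /=; lra.
by rewrite !INR_addn; lra.
Qed.

Lemma pow_le_reg (a b : R) (n : nat) :
  0 <= a -> 0 <= b -> (0 < n)%N -> a ^ n <= b ^ n -> a <= b.
Proof.
move=> a0 b0 n_gt0 hab; apply: Rnot_lt_le => ba.
have pow_lt k : b ^ k.+1 < a ^ k.+1.
  elim: k => [|k IH]; first by rewrite /= !Rmult_1_r.
  have bk0 := pow_le b k.+1 b0; change (b * b ^ k.+1 < a * a ^ k.+1); nra.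
by case: n n_gt0 hab => // n _; have := pow_lt n; lra.
Qed.

Lemma sqrt_sqr_eq (a : R) : 0 <= a -> sqrt a ^ 2 = a.
Proof. by move=> a0; rewrite /= Rmult_1_r sqrt_sqrt. Qed.

Lemma sqrt_sqrt_pow4 (a : R) : 0 <= a -> sqrt (sqrt a) ^ 4 = a.
Proof.
move=> a0; rewrite (_ : 4%N = (2 * 2)%N) // pow_mult sqrt_sqr_eq; last exact: sqrt_pos.
exact: sqrt_sqr_eq.
Qed.

Lemma arcs_le_kst (T : finType) (e r : rel T) (V : {set T}) (k : nat) :
  simple_graph e -> subrel r e -> (#|V| <= k)%N ->
  INR (arcs r V) <=
  INR #|V| * (2 * sqrt (INR k) + sqrt (sqrt (64 * INR (ncycles4 e)))).
Proof.
move=> graph sub_re Vk.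
set C := INR (ncycles4 e); set N := INR #|V|; set E := INR (arcs r V).
set h := sqrt (INR k); set x := sqrt (sqrt (64 * C)).
have C0 : 0 <= C := pos_INR _; have N0 : 0 <= N := pos_INR _; have E0 : 0 <= E := pos_INR _.
have h0 : 0 <= h := sqrt_pos _; have x0 : 0 <= x := sqrt_pos _.
have h2 : h ^ 2 = INR k by apply/sqrt_sqr_eq/pos_INR.
have x4 : x ^ 4 = 64 * C by apply: sqrt_sqrt_pow4; lra.
have Z_le := INR_leq (k22s_le V graph sub_re); rewrite INR_muln -/C in Z_le.
have natR4 : INR 4 = 4 by rewrite /=; lra.
have natR8 : INR 8 = 8 by rewrite /=; lra.
case: (kst_dichotomy Vk (arcs_sqr_le r V) (cherries_sqr_le r V)) => /INR_leq.
  rewrite !INR_expn !INR_muln natR4 -/N -/E -h2 => hE.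
  have : E <= 2 * N * h by apply: (pow_le_reg (n := 2)) => //; nra.
  nra.
rewrite !INR_expn !INR_muln natR8 -/N -/E => hE.
have : E <= N * x.
  apply: (pow_le_reg (n := 4)) => //; first exact: Rmult_le_pos.
  rewrite Rpow_mult_distr x4; have := pow_le N 4 N0; nra.
nra.
Qed.

Lemma INR_P_count_le (T : finType) (e o : rel T) :
  simple_graph e -> degree_orientation e o ->
  INR (P_count e o) <= 2 * INR (nedges e) *
    (2 * sqrt (INR #|[set v | high e v]|) + sqrt (sqrt (64 * INR (ncycles4 e)))).
Proof.
move=> graph orient; have [sub_oe _] := orient.
apply: Rle_trans (INR_leq (P_count_le_sum_arcs graph orient)) _.
apply: Rle_trans (INR_sum_le_mulr (G := fun t : 'I_#|T| => #|threshold_set e t|) _) _.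
  move=> t; apply: (arcs_le_kst (k := #|[set v | high e v]|) graph sub_oe).
  by apply/subset_leq_card/subsetP => v; rewrite !inE => /andP[].
apply: Rmult_le_compat_r.
  by apply: Rplus_le_le_0_compat; [apply: Rmult_le_pos; [lra | apply: sqrt_pos] | apply: sqrt_pos].
by have := INR_leq (sum_card_threshold_le e); rewrite INR_muln.
Qed.

Lemma cycles_ge_paths (m k C P : R) :
  0 < m -> 0 <= k -> 0 <= C -> k ^ 3 <= 8 * m ^ 2 ->
  P <= 2 * m * (2 * sqrt k + sqrt (sqrt (64 * C))) ->
  100 * Rpower m (4 / 3) < P -> P <= C.
Proof.
move=> m0 k0 C0 k3 hP hM.
set M := Rpower m (4 / 3) in hM; set h := sqrt k in hP; set x := sqrt (sqrt _) in hP.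
have M0 : 0 < M := exp_pos _.
have h0 : 0 <= h := sqrt_pos _; have x0 : 0 <= x := sqrt_pos _.
have h2 : h ^ 2 = k := sqrt_sqr_eq k0.
have x4 : x ^ 4 = 64 * C by apply: sqrt_sqrt_pow4; lra.
have M3 : M ^ 3 = m ^ 4.
  rewrite -(Rpower_pow 3 _ M0) /M Rpower_mult -(Rpower_pow 4 _ m0).
  by congr Rpower; rewrite /=; field.
have m4 : 0 < m ^ 4 := pow_lt m 4 m0.
have mh : 4 * m * h <= 6 * M.
  apply: (pow_le_reg (n := 6)) => //; [nra | lra |].
  have -> : (4 * m * h) ^ 6 = 4096 * m ^ 4 * m ^ 2 * (h ^ 2) ^ 3 by ring.
  have -> : (6 * M) ^ 6 = 46656 * m ^ 4 * m ^ 4 by rewrite -M3; ring.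
  have m6 : 0 <= m ^ 4 * m ^ 2 by apply/Rlt_le/Rmult_lt_0_compat => //; apply: pow_lt.
  rewrite h2; have := Rmult_le_compat_l _ _ _ m6 k3; nra.
have P_mx : P <= 4 * m * x by nra.
have P4 : P ^ 4 <= 16384 * m ^ 4 * C.
  have -> : 16384 * m ^ 4 * C = (4 * m * x) ^ 4 by rewrite Rpow_mult_distr x4; ring.
  apply: pow_incr; lra.
have P3 : 1000000 * m ^ 4 <= P ^ 3.
  have -> : 1000000 * m ^ 4 = (100 * M) ^ 3 by rewrite Rpow_mult_distr M3; ring.
  apply: pow_incr; lra.
have : m ^ 4 * (1000000 * P) <= m ^ 4 * (16384 * C).
  have P0 : 0 <= P by lra.
  have := Rmult_le_compat_l _ _ _ P0 P3.
  have -> : P * P ^ 3 = P ^ 4 by ring.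
  nra.
move/(Rmult_le_reg_l _ _ _ m4); lra.
Qed.

Lemma log2_ge1 (x : R) : 2 <= x -> 1 <= log2 x.
Proof.
move=> x2; have ln2_gt0 : 0 < ln 2 by have := ln_lt_2; lra.
have : ln 2 <= ln x.
  by case: (Rle_lt_or_eq_dec _ _ x2) => [/ln_increasing|<-]; lra.
rewrite /log2 => h; apply: (Rmult_le_reg_r (ln 2)) => //.
by rewrite /Rdiv Rmult_assoc Rinv_l; lra.
Qed.

Theorem theorem2 (T : finType) (e : rel T) (o : rel T) :
  simple_graph e ->
  degree_orientation e o ->
  let n := #|T| in
  let m := nedges e in
  let P := INR (P_count e o) in
  (P > 100 * Rpower (INR m) (4 / 3) * (log2 (INR n)) ^ 2)%R ->
  (INR (ncycles4 e) >= P / (100 * (log2 (INR n)) ^ 2))%R.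
Proof.
move=> graph orient n m P hP; have [sub_oe _] := orient.
have M0 : 0 < Rpower (INR m) (4 / 3) := exp_pos _.
have [u [v /sub_oe euv]] : exists u v, o u v.
  apply: (P_count_gt0_arc (e := e)); apply/ltP/INR_lt; rewrite -/P /=.
  have := pow2_ge_0 (log2 (INR n)); nra.
have m0 : 0 < INR m by apply: lt_0_INR; apply/ltP; exact: nedges_gt0 euv.
have L1 : 1 <= log2 (INR n) ^ 2.
  have n2 : 2 <= INR n.
    by have := INR_leq (card_gt1_of_edge graph.2 euv); rewrite /n [INR 2]/=; lra.
  have := log2_ge1 n2; nra.
have P_le_C : P <= INR (ncycles4 e).
  apply: (cycles_ge_paths m0 (pos_INR _) (pos_INR _) _ (INR_P_count_le graph orient)).
    have := INR_leq (card_high_cube_le e).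
    by rewrite /m INR_expn INR_muln INR_expn [INR 8]/=; lra.
  by rewrite -/P; nra.
apply: Rle_ge; apply: Rle_trans P_le_C.
apply: (Rmult_le_reg_r (100 * log2 (INR n) ^ 2)); first lra.
rewrite /Rdiv Rmult_assoc Rinv_l; last lra.
have := pos_INR (P_count e o); rewrite -/P; nra.
Qed.
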